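(* Let $E$ be a nonzero real Banach space, $K$ be a nonempty $w(E,E^* )$-compact convex subset of $E$ and $\mathbb I_K$ its indicator function. (a) If $y^{**}\in(\partial\mathbb I_K)^{\mathbb F}(y^* )$ then $y^{**}\in\widehat K$ and $\langle y^*,y^{**}\rangle=\sup_{x\in K}\langle x,y^*\rangle$. (b) $R((\partial\mathbb I_K)^{\mathbb F})\subset\widehat K\subset\widehat E$.
   Context: $\widehat x\in E^{**}$ is the canonical image of $x\in E$; $\widehat K=\{\widehat x:x\in K\}$, $\widehat E=\{\widehat x:x\in E\}$; $\mathbb I_K=0$ on $K$ and $\infty$ elsewhere. For proper convex lsc $f$, $x^*\in\partial f(x)$ iff $f(x)+f^*(x^* )=\langle x,x^*\rangle$; $\partial\mathbb I_K$ is closed, monotone and quasidense. For a multifunction $S\colon E\rightrightarrows E^*$ with nonempty graph: closed means $G(S)$ norm-closed; monotone means $\langle s-t,s^*-t^*\rangle\ge0$ on $G(S)$; quasidense means for every $(x,x^* )$, $\inf_{(s,s^* )\in G(S)}[\tfrac12\|s-x\|^2+\tfrac12\|s^*-x^*\|^2+\langle s-x,s^*-x^*\rangle]\le0$. Let $\varphi_S(x,x^* )=\sup_{(s,s^* )\in G(S)}[\langle s,x^*\rangle+\langle x,s^*\rangle-\langle s,s^*\rangle]$ and $\varphi_S^*$ its conjugate on $E^*\times E^{**}$ under $\langle (x,x^* ),(y^*,y^{**})\rangle=\langle x,y^*\rangle+\langle x^*,y^{**}\rangle$. For $S$ closed, monotone, quasidense, $S^{\mathbb F}\colon E^*\rightrightarrows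 E^{**}$ is given by $(y^*,y^{**})\in G(S^{\mathbb F})$ iff $\varphi_S^*(y^*,y^{**})=\langle y^*,y^{**}\rangle$; $R(\cdot)$ denotes range. *)

From HB Require Import structures.
From mathcomp Require Import all_boot all_order all_algebra.
From mathcomp Require Import all_classical all_reals all_analysis.
Set Implicit Arguments. Unset Strict Implicit. Unset Printing Implicit Defensive.
Import Order.TTheory GRing.Theory Num.Theory.
Import numFieldNormedType.Exports.
Local Open Scope classical_set_scope.
Local Open Scope ring_scope.

Section Banach.
Context {R : realType} {E : normedModType R}.

Definition is_dual (f : E -> R) : Prop :=
  (forall (a : R) (x y : E), f (a *: x + y) = a * f x + f y) /\ continuous f.

Definition dual := {f : E -> R | is_dual f}.
Definition dapp (f : dual) : E -> R := proj1_sig f.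

Definition dnorm (f : dual) : R := sup [set `|dapp f x| | x in [set x : E | `|x| <= 1]].

Definition is_bidual (phi : dual -> R) : Prop :=
  (forall (a : R) (f g h : dual),
      (forall x, dapp h x = a * dapp f x + dapp g x) -> phi h = a * phi f + phi g)
  /\ exists M : R, forall f : dual, `|phi f| <= M * dnorm f.

Definition hat (x : E) : dual -> R := fun f => dapp f x.
Definition Khat (K : set E) : set (dual -> R) := [set hat x | x in K].
Definition Ehat : set (dual -> R) := [set hat x | x in [set: E]].

Definition weakE : topologicalType :=
  sup_topology (fun f : dual => Topological.on (initial_topology (dapp f))).

Definition indicator_ext (K : set E) : E -> \bar R :=
  fun x => if `[< K x >] then 0%E else +oo%E.

Definition subdiff (f : E -> \bar R) : E -> dual -> Prop :=
  fun x xs => f x \is a fin_num /\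
    forall y, (f x + (dapp xs (y - x))%:E <= f y)%E.

(* multifunctions S : E ⇉ E^*  are given by their graphs *)
Definition phi_S (S : E -> dual -> Prop) (x : E) (xs : dual) : \bar R :=
  ereal_sup [set z | exists (s : E) (ss : dual),
              S s ss /\ z = (dapp xs s + dapp ss x - dapp ss s)%:E].

Definition phi_S_star (S : E -> dual -> Prop) (ys : dual) (yss : dual -> R) : \bar R :=
  ereal_sup [set z | exists (x : E) (xs : dual),
              z = ((dapp ys x + yss xs)%:E - phi_S S x xs)%E].

Definition SF (S : E -> dual -> Prop) : dual -> (dual -> R) -> Prop :=
  fun ys yss => is_bidual yss /\ phi_S_star S ys yss = (yss ys)%:E.

Definition range_SF (S : E -> dual -> Prop) : set (dual -> R) :=
  [set yss | exists ys, SF S ys yss].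

End Banach.
Arguments dual {R} E.
Arguments weakE {R} E.
Arguments Ehat {R} E.

(* Since phi_S^*(ys, yss) =
   yss ys, testing phi_S^* at (x, 0) and at (x0, t f) with t -> +oo gives
   ys x <= yss ys on K and yss f <= sup_K f for every f in E^*.  A linear
   functional on E^* dominated by the support function of a weakly compact
   convex K is the evaluation at a point of K: for finitely many f, the
   residual sum_f (yss f - f x)^2 has a minimiser x0 on K, and its first-order
   optimality condition tested against the support bound forces the residual
   to vanish at x0; the finite intersection property then yields x in K with
   f x = yss f for all f.  So yss = x^ and yss ys = ys x = sup_K ys. *)

From HB Require Import structures.
From mathcomp Require Import all_boot all_order all_algebra.
From mathcomp Require Import all_classical all_reals all_analysis.
From mathcomp Require Import ring lra.
Set Implicit Arguments.
Unset Strict Implicit.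
Unset Printing Implicit Defensive.
Import Order.TTheory GRing.Theory Num.Theory.
Import numFieldNormedType.Exports.
Local Open Scope classical_set_scope.
Local Open Scope ring_scope.
Local Open Scope convex_scope.

Lemma compact_common_solution (T : ptopologicalType) (I : choiceType)
    (R : realType) (K : set T) (h : I -> T -> R) (c : I -> R) :
  compact K -> (forall i, continuous (h i)) ->
  (forall s : seq I, exists2 x, K x & forall i, i \in s -> h i x = c i) ->
  exists2 x, K x & forall i, h i x = c i.
Proof.
move=> Kcompact hcont finsol; apply: contrapT => nosol.
have Kcover : K `<=` \bigcup_(i in [set: I]) (h i @^-1` [set r | r != c i]).
  move=> x Kx; apply: contrapT => xcov; apply: nosol; exists x => // i.
  by apply: contrapT => hi; apply: xcov; exists i => //=; apply/eqP.
rewrite compact_cover in Kcompact.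
have [D _ Dcover] := Kcompact I setT _
  (fun i _ => proj1 (continuousP _) (hcont i) _ (@open_neq R (c i))) Kcover.
have [x Kx xsol] := finsol (finmap.enum_fset D).
have [i Di /=] := Dcover x Kx.
by rewrite xsol ?eqxx.
Qed.

Lemma sup_eq_max (R : realType) (A : set R) m : A m -> ubound A m -> sup A = m.
Proof.
move=> Am Am_ub; apply/le_anti/andP; split.
  by apply: ge_sup => //; exists m.
by apply: ub_le_sup => //; exists m.
Qed.

Lemma linear_le_quadratic_le0 (R : realFieldType) (a b : R) : 0 <= b ->
  (forall t, 0 <= t -> t <= 1 -> 2 * t * a <= t ^+ 2 * b) -> a <= 0.
Proof.
move=> b0 quad; rewrite leNgt; apply/negP => a0.
have ab0 : 0 < a + b by lra.
pose t := a / (a + b).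
have t0 : 0 < t by exact: divr_gt0.
have t1 : t <= 1 by rewrite ler_pdivrMr // mul1r; lra.
have tab : t * (a + b) = a by rewrite /t divfK // gt_eqF.
have := quad t (ltW t0) t1.
nra.
Qed.

Section DualFunctionals.
Context {R : realType} {E : normedModType R}.
Local Notation dualc := {classic (dual E)}.

Lemma dapp_linear (f : dual E) a x y :
  dapp f (a *: x + y) = a * dapp f x + dapp f y.
Proof. exact: (proj1 (proj2_sig f)). Qed.

Lemma dapp_continuous (f : dual E) : continuous (dapp f).
Proof. exact: (proj2 (proj2_sig f)). Qed.

Lemma dappB (f : dual E) x y : dapp f (x - y) = dapp f x - dapp f y.
Proof. by rewrite addrC -scaleN1r dapp_linear mulN1r addrC. Qed.

Lemma dapp0 (f : dual E) : dapp f 0 = 0.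
Proof. by rewrite -(subrr 0) dappB subrr. Qed.

Lemma dapp_weak_continuous (f : dual E) : continuous (dapp f : weakE E -> R).
Proof.
move=> x U /(@initial_continuous E R (dapp f) x) fxU.
exact: ((@cvg_sup E (dual E) _ (nbhs (x : weakE E)) x _).1
  (@cvg_id _ _) f _ fxU).
Qed.

Definition dual_comb_fun (lam : dual E -> R) (s : seq dualc) (x : E) : R :=
  \sum_(f <- s) lam f * dapp f x.

Lemma dual_comb_is_dual lam s : is_dual (dual_comb_fun lam s).
Proof.
split=> [a x y|].
  rewrite /dual_comb_fun mulr_sumr -big_split /=.
  by apply: eq_bigr => f _; rewrite dapp_linear; ring.
apply: continuous_big => [|f _ x]; first exact: add_continuous.
by apply: continuousM; [exact: cst_continuous | exact: dapp_continuous].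
Qed.

Definition dual_comb lam s : dual E := exist _ _ (dual_comb_is_dual lam s).

Lemma dapp_dual_comb lam s x :
  dapp (dual_comb lam s) x = \sum_(f <- s) lam f * dapp f x.
Proof. by []. Qed.

Section Bidual.
Variable yss : dual E -> R.
Hypothesis yss_bidual : is_bidual yss.

Lemma bidual_eq0 (z : dual E) : (forall x, dapp z x = 0) -> yss z = 0.
Proof.
move=> z0; have zz x : dapp z x = 1 * dapp z x + dapp z x.
  by rewrite z0 mulr0 addr0.
by have := (proj1 yss_bidual) 1 z z z zz; rewrite mul1r; lra.
Qed.

Lemma bidual_dual_comb lam s :
  yss (dual_comb lam s) = \sum_(f <- s) lam f * yss f.
Proof.
elim: s => [|f s IHs].
  by rewrite big_nil; apply: bidual_eq0 => x; rewrite dapp_dual_comb big_nil.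
rewrite big_cons -IHs; apply: (proj1 yss_bidual) => x.
by rewrite !dapp_dual_comb big_cons.
Qed.

End Bidual.

Definition dual_residual (c : dual E -> R) (s : seq dualc) (x : E) : R :=
  \sum_(f <- s) (c f - dapp f x) ^+ 2.

Lemma dual_residual_weak_continuous c s :
  continuous (dual_residual c s : weakE E -> R).
Proof.
apply: continuous_big => [|f _]; first exact: add_continuous.
have -> : (fun x : weakE E => (c f - dapp f x) ^+ 2) =
          (fun x => (c f - dapp f x) * (c f - dapp f x)).
  by apply: funext => x; rewrite expr2.
have cfB x : {for x, continuous (fun y : weakE E => c f - dapp f y)}.
  exact: (@cvgB R R^o _ _ (nbhs_filter (x : weakE E)) (fun=> c f) (dapp f) _ _
    (cvg_cst _) (@dapp_weak_continuous f x)).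
move=> x.
exact: (@cvgM R _ _ (nbhs_filter (x : weakE E)) _ _ _ _ (cfB x) (cfB x)).
Qed.

Lemma dual_residual_eq0 c s x :
  dual_residual c s x = 0 -> forall f, f \in s -> dapp f x = c f.
Proof.
move=> /eqP; rewrite psumr_eq0 => [/allP res0 f fs|f _]; last exact: sqr_ge0.
by have /= := res0 f fs; rewrite sqrf_eq0 subr_eq0 => /eqP.
Qed.

Section ConvexSet.
Variable K : set E.
Hypothesis K_convex : convex_set (K : set (convex_lmodType E)).

(* Compare x0 with the points of the segment [x0, y], which lies in K. *)
Lemma dual_residual_min_variational c s x0 :
  K x0 -> (forall y, K y -> dual_residual c s x0 <= dual_residual c s y) ->
  forall y, K y ->
  \sum_(f <- s) (c f - dapp f x0) * (dapp f y - dapp f x0) <= 0.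
Proof.
move=> Kx0 x0min y Ky.
apply: (@linear_le_quadratic_le0 _ _
  (\sum_(f <- s) (dapp f y - dapp f x0) ^+ 2)).
  by apply: sumr_ge0 => f _; exact: sqr_ge0.
move=> t t0 t1.
pose xt : convex_lmodType E :=
  (y : convex_lmodType E) <| Itv01 t0 t1 |> (x0 : convex_lmodType E).
have Kxt : K xt by apply: set_mem; apply: K_convex; exact: mem_set.
have dapp_xt f : dapp f xt = dapp f x0 + t * (dapp f y - dapp f x0).
  rewrite /xt /conv /= dapp_linear -[_ *: x0]addr0 dapp_linear dapp0 addr0.
  rewrite /unstable.onem; ring.
rewrite -subr_ge0.
have -> : t ^+ 2 * (\sum_(f <- s) (dapp f y - dapp f x0) ^+ 2) -
    2 * t * (\sum_(f <- s) (c f - dapp f x0) * (dapp f y - dapp f x0)) =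
    dual_residual c s xt - dual_residual c s x0.
  rewrite !mulr_sumr -!sumrB; apply: eq_bigr => f _; rewrite dapp_xt; ring.
by rewrite subr_ge0; exact: x0min.
Qed.

Variable yss : dual E -> R.
Hypothesis yss_bidual : is_bidual yss.
Hypothesis yss_le_support :
  forall f M, (forall x, K x -> dapp f x <= M) -> yss f <= M.
Hypothesis K_weak_compact : @compact (weakE E) K.
Hypothesis K_neq0 : K !=set0.

Lemma bidual_le_support_attained_fin (s : seq dualc) :
  exists2 x, K x & forall f : dualc, f \in s -> dapp f x = yss f.
Proof.
have [x0 /set_mem Kx0 x0min] :=
  @compact_EVT_min (weakE E) R _ K K_neq0 K_weak_compact
    (continuous_subspaceT (@dual_residual_weak_continuous yss s)).
exists x0 => //; apply: dual_residual_eq0.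
pose lam f := yss f - dapp f x0.
have comb_le : yss (dual_comb lam s) <= \sum_(f <- s) lam f * dapp f x0.
  apply: yss_le_support => y Ky; rewrite dapp_dual_comb -subr_le0 -sumrB.
  under eq_bigr do rewrite -mulrBr.
  apply: (@dual_residual_min_variational yss s x0 Kx0 _ y Ky) => z Kz.
  exact: x0min (mem_set Kz).
apply/eqP; rewrite eq_le sumr_ge0 ?andbT => [|f _]; last exact: sqr_ge0.
have -> : dual_residual yss s x0 =
    yss (dual_comb lam s) - \sum_(f <- s) lam f * dapp f x0.
  rewrite bidual_dual_comb // -sumrB.
  by apply: eq_bigr => f _; rewrite /lam; ring.
by rewrite subr_le0.
Qed.

Lemma bidual_le_support_in_Khat : Khat K yss.
Proof.
have [x Kx xsol] := @compact_common_solution (weakE E) dualc R K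
  (fun f => dapp f) yss K_weak_compact dapp_weak_continuous
  bidual_le_support_attained_fin.
by exists x => //; apply: funext => f; exact: xsol.
Qed.

End ConvexSet.

Lemma subdiff_indicator_normal (K : set E) s ss :
  subdiff (indicator_ext K) s ss ->
  K s /\ forall y, K y -> dapp ss (y - s) <= 0.
Proof.
move=> [Is_fin Is_sub].
have Ks : K s by move: Is_fin; rewrite /indicator_ext; case: asboolP.
split=> // y Ky; have := Is_sub y.
by rewrite /indicator_ext (asboolT Ky) (asboolT Ks) add0e lee_fin.
Qed.

Lemma phi_S_subdiff_indicator_le (K : set E) x xs c :
  (forall s ss, K s -> (forall y, K y -> dapp ss (y - s) <= 0) ->
     dapp xs s + dapp ss x - dapp ss s <= c) ->
  (phi_S (subdiff (indicator_ext K)) x xs <= c%:E)%E.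
Proof.
move=> le_c; apply: ge_ereal_sup.
move=> _ [s [ss [/subdiff_indicator_normal[Ks ssN] ->]]].
by rewrite lee_fin; exact: le_c.
Qed.

Lemma SF_phi_S_ge (S : E -> dual E -> Prop) ys yss x xs c :
  SF S ys yss -> (phi_S S x xs <= c%:E)%E -> dapp ys x + yss xs - c <= yss ys.
Proof.
move=> [_ SF_eq] phi_le.
have : ((dapp ys x + yss xs)%:E - phi_S S x xs <= phi_S_star S ys yss)%E.
  by apply: ereal_sup_ubound; exists x, xs.
rewrite SF_eq => /(le_trans (leeB (lexx _) phi_le)).
by rewrite -EFinB lee_fin.
Qed.

Section SFIndicator.
Variables (K : set E) (ys : dual E) (yss : dual E -> R).
Hypothesis yss_SF : SF (subdiff (indicator_ext K)) ys yss.

Lemma SF_subdiff_indicator_ge x : K x -> dapp ys x <= yss ys.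
Proof.
move=> Kx; have := @SF_phi_S_ge _ ys yss x (dual_comb (fun=> 0) [::]) 0 yss_SF.
rewrite (@bidual_eq0 yss (proj1 yss_SF)) => [|y]; last first.
  by rewrite dapp_dual_comb big_nil.
rewrite addr0 subr0; apply; apply: phi_S_subdiff_indicator_le => s ss Ks ssN.
by rewrite dapp_dual_comb big_nil add0r -dappB; exact: ssN.
Qed.

Lemma SF_subdiff_indicator_le_support : K !=set0 ->
  forall f M, (forall x, K x -> dapp f x <= M) -> yss f <= M.
Proof.
move=> [x0 Kx0] f M fM; rewrite leNgt; apply/negP => Mlt.
have SF_t t : 0 <= t -> dapp ys x0 + t * yss f - t * M <= yss ys.
  move=> t0.
  have := @SF_phi_S_ge _ ys yss x0 (dual_comb (fun=> t) [:: f]) (t * M) yss_SF.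
  rewrite bidual_dual_comb ?big_seq1; last exact: (proj1 yss_SF).
  apply; apply: phi_S_subdiff_indicator_le => s ss Ks ssN.
  rewrite dapp_dual_comb big_seq1 -addrA -dappB.
  have := ssN _ Kx0; have : t * dapp f s <= t * M by rewrite ler_wpM2l ?fM.
  lra.
pose C := yss ys - dapp ys x0; pose d := yss f - M.
have d0 : 0 < d by rewrite subr_gt0.
pose t := (`|C| + 1) / d.
have t0 : 0 <= t by rewrite divr_ge0 ?ltW // addr_ge0.
have td : t * d = `|C| + 1 by rewrite /t divfK // gt_eqF.
have := SF_t t t0; have := ler_norm C.
rewrite /C /d in td *; nra.
Qed.

End SFIndicator.
End DualFunctionals.

Theorem lemma3p5 (R : realType) (E : completeNormedModType R) (K : set E) :
  (exists x : E, x != 0) ->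
  K !=set0 ->
  convex_set (K : set (convex_lmodType E)) ->
  @compact (weakE E) K ->
  (forall (ys : dual E) (yss : dual E -> R),
      SF (subdiff (indicator_ext K)) ys yss ->
      Khat K yss /\ yss ys = sup [set dapp ys x | x in K]) /\
  (range_SF (subdiff (indicator_ext K)) `<=` Khat K /\ Khat K `<=` Ehat E).
Proof.
move=> _ K_neq0 K_convex K_weak_compact.
have partA ys yss : SF (subdiff (indicator_ext K)) ys yss ->
    Khat K yss /\ yss ys = sup [set dapp ys x | x in K].
  move=> yss_SF.
  have [x Kx xyss] := bidual_le_support_in_Khat K_convex (proj1 yss_SF)
    (SF_subdiff_indicator_le_support yss_SF K_neq0) K_weak_compact K_neq0.
  split; first by exists x.
  apply/esym/sup_eq_max; first by exists x; rewrite // -xyss.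
  by move=> _ [y Ky <-]; exact: SF_subdiff_indicator_ge yss_SF y Ky.
split=> //; split; first by move=> yss [ys /partA[]].
by move=> _ [x Kx <-]; exists x.
Qed.
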